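(* Let $A=D+N\in\mathcal{M}_n(\mathbb{H})$, where $D$ is a diagonal matrix with real entries and $N$ is a strictly upper triangular (hence nilpotent) matrix that is cycle-free. Then $W(A)$ is convex.
   Context: $\mathbb{H}$ denotes the real quaternions. The numerical range of $A\in\mathcal{M}_n(\mathbb{H})$ is $W(A)=\{\mathbf{x}^*A\mathbf{x}:\mathbf{x}\in\mathbb{H}^n,\ \mathbf{x}^*\mathbf{x}=1\}$. The graph $\mathcal{G}_N$ of $N=[a_{ij}]$ is the undirected graph on $\{1,\dots,n\}$ with an edge between $i$ and $j$ (a loop if $i=j$) whenever $a_{ij}\ne0$ or $a_{ji}\ne0$; $N$ is cycle-free if $\mathcal{G}_N$ contains no cycle. *)

(* Real quaternions H over a real closed field R
   (the paper's case is R = the real numbers). *)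
From HB Require Import structures.
From mathcomp Require Import all_boot all_order all_algebra.
Set Implicit Arguments. Unset Strict Implicit. Unset Printing Implicit Defensive.
Import Order.TTheory GRing.Theory Num.Theory.
Local Open Scope ring_scope.

(* quaternion q0 + q1 i + q2 j + q3 k *)
Record quat (R : Type) := Quat { q0 : R; q1 : R; q2 : R; q3 : R }.

Definition quat_to (R : Type) (q : quat R) := (q0 q, q1 q, q2 q, q3 q).
Definition quat_of (R : Type) (t : R * R * R * R) :=
  let: (a, b, c, d) := t in Quat a b c d.
Lemma quat_toK (R : Type) : cancel (@quat_to R) (@quat_of R).
Proof. by case. Qed.
HB.instance Definition _ (R : eqType) :=
  Equality.copy (quat R) (can_type (@quat_toK R)).

Section QuatOps.
Variable R : rcfType.

Definition qzero : quat R := Quat 0 0 0 0.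
Definition qreal (r : R) : quat R := Quat r 0 0 0.
Definition qadd (p q : quat R) : quat R :=
  Quat (q0 p + q0 q) (q1 p + q1 q) (q2 p + q2 q) (q3 p + q3 q).
(* Hamilton product: i^2 = j^2 = k^2 = ijk = -1 *)
Definition qmul (p q : quat R) : quat R :=
  Quat (q0 p * q0 q - q1 p * q1 q - q2 p * q2 q - q3 p * q3 q)
       (q0 p * q1 q + q1 p * q0 q + q2 p * q3 q - q3 p * q2 q)
       (q0 p * q2 q - q1 p * q3 q + q2 p * q0 q + q3 p * q1 q)
       (q0 p * q3 q + q1 p * q2 q - q2 p * q1 q + q3 p * q0 q).
Definition qconj (p : quat R) : quat R := Quat (q0 p) (- q1 p) (- q2 p) (- q3 p).
Definition qscale (t : R) (p : quat R) : quat R :=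
  Quat (t * q0 p) (t * q1 p) (t * q2 p) (t * q3 p).

Definition qdot (n : nat) (x y : 'I_n -> quat R) : quat R :=
  \big[qadd/qzero]_(i < n) qmul (qconj (x i)) (y i).
Definition qform (n : nat) (A : 'M[quat R]_n) (x : 'I_n -> quat R) : quat R :=
  \big[qadd/qzero]_(i < n) \big[qadd/qzero]_(j < n)
     qmul (qconj (x i)) (qmul (A i j) (x j)).

Definition numrange (n : nat) (A : 'M[quat R]_n) : quat R -> Prop :=
  fun q => exists x : 'I_n -> quat R, qdot x x = qreal 1 /\ qform A x = q.

Definition qconvex (S : quat R -> Prop) : Prop :=
  forall p q (t : R), S p -> S q -> 0 <= t <= 1 ->
    S (qadd (qscale (1 - t) p) (qscale t q)).

Definition mx_add (n : nat) (A B : 'M[quat R]_n) : 'M[quat R]_n :=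
  \matrix_(i, j) qadd (A i j) (B i j).

Definition real_diagonal (n : nat) (D : 'M[quat R]_n) : Prop :=
  forall i j : 'I_n, D i j = if i == j then qreal (q0 (D i i)) else qzero.

Definition strictly_upper (n : nat) (N : 'M[quat R]_n) : Prop :=
  forall i j : 'I_n, (j <= i)%N -> N i j = qzero.

Definition mx_graph (n : nat) (N : 'M[quat R]_n) : rel 'I_n :=
  fun i j => (N i j != qzero) || (N j i != qzero).

Definition cycle_free (n : nat) (N : 'M[quat R]_n) : Prop :=
  (forall i, ~~ mx_graph N i i) /\
  (forall s : seq 'I_n, uniq s -> (3 <= size s)%N -> ~~ cycle (mx_graph N) s).

End QuatOps.

(* The graph of N is a forest, so there is a diagonal
      matrix U of unit quaternions making every entry of U^* N U real:
      peel off a vertex with at most one neighbour, gauge the rest, and rotate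
      the removed vertex to make its edge real (gauge_set).  U^* D U = D, so
      B = U^* A U is real, and W(A) = W(B) (numrange_diag_similar).
   2. Rotations.  For every matrix, W is invariant under p |-> g^* p g for unit
      g, so p lies in W iff its complex representative q0 p + |Im p| i does
      (numrange_qhat).
   3. Complex picture.  For real B, that representative lies in W(B) iff it
      lies in the complex numerical range W_C(B) (numrange_realE).  W_C(B) is
      convex by the Toeplitz-Hausdorff theorem (cnumrange_convex) and
      symmetric about the real axis, and these two properties lift back to
      convexity in H (qconvex_of_complex). *)

From HB Require Import structures.
From mathcomp Require Import all_boot all_order all_algebra.
From mathcomp Require Import ring lra zify complex.
Set Implicit Arguments. Unset Strict Implicit. Unset Printing Implicit Defensive.
Import Order.TTheory GRing.Theory Num.Theory.
Local Open Scope ring_scope.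

Lemma quatP (R : Type) (p q : quat R) :
  q0 p = q0 q -> q1 p = q1 q -> q2 p = q2 q -> q3 p = q3 q -> p = q.
Proof. by case: p; case: q => /= ? ? ? ? ? ? ? ? -> -> -> ->. Qed.

Definition nq (R : rcfType) (p : quat R) :=
  q0 p ^+ 2 + q1 p ^+ 2 + q2 p ^+ 2 + q3 p ^+ 2.

Ltac qsolve := try unfold nq;
  repeat match goal with p : quat _ |- _ => destruct p end;
  (try apply: quatP); rewrite /=; ring.

Section Quaternions.
Variable R : rcfType.
Implicit Types (p q g : quat R) (c : R).

Lemma nq_ge0 p : 0 <= nq p.
Proof. by case: p => a b c d; rewrite /nq /=; nra. Qed.

Lemma nq_eq0 p : nq p = 0 -> p = qzero R.
Proof.
case: p => a b c d; rewrite /nq /= => h.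
by apply: quatP => /=; nra.
Qed.

Lemma nq_conj p : nq (qconj p) = nq p.
Proof. by rewrite /nq /=; ring. Qed.

Lemma sqrt_inv_sq c : 0 < c -> (Num.sqrt c)^-1 ^+ 2 * c = 1.
Proof. by move=> c0; rewrite exprVn sqr_sqrtr ?ltW // mulVf // gt_eqF. Qed.

Lemma qscale1 p : qscale 1 p = p. Proof. qsolve. Qed.

Lemma q0_sum n (F : 'I_n -> quat R) :
  q0 (\big[@qadd R/qzero R]_(i < n) F i) = \sum_(i < n) q0 (F i).
Proof. exact: (big_morph (@q0 R) (fun p q => erefl) erefl). Qed.

Lemma q1_sum n (F : 'I_n -> quat R) :
  q1 (\big[@qadd R/qzero R]_(i < n) F i) = \sum_(i < n) q1 (F i).
Proof. exact: (big_morph (@q1 R) (fun p q => erefl) erefl). Qed.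

Definition qnormalize g := qscale (Num.sqrt (nq g))^-1 g.

Lemma nq_qnormalize g : 0 < nq g -> nq (qnormalize g) = 1.
Proof.
move=> g0; rewrite -(sqrt_inv_sq g0) /qnormalize.
by move: (Num.sqrt _)^-1 => s; qsolve.
Qed.

Definition imnorm p := Num.sqrt (q1 p ^+ 2 + q2 p ^+ 2 + q3 p ^+ 2).

(* the canonical representative q0 p + |Im p| i of the similarity class
   of p, lying in the complex plane R + R i *)
Definition qhat p := Quat (q0 p) (imnorm p) 0 0.

Lemma imnorm_ge0 p : 0 <= imnorm p. Proof. exact: sqrtr_ge0. Qed.

Lemma imnorm_sq p : imnorm p ^+ 2 = q1 p ^+ 2 + q2 p ^+ 2 + q3 p ^+ 2.
Proof. by rewrite sqr_sqrtr //; nra. Qed.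

(* Every quaternion is unitarily similar to its representative qhat p:
   the rotation taking Im p to |Im p| i is conjugation by a suitable g. *)
Lemma qhat_similar p : exists g, nq g = 1 /\ qmul (qconj g) (qmul p g) = qhat p.
Proof.
suff [g [g0 hg]] : exists g, 0 < nq g /\
    qmul (qconj g) (qmul p g) = qscale (nq g) (qhat p).
  exists (qnormalize g); split; first exact: nq_qnormalize.
  have scaled s : qmul (qconj (qscale s g)) (qmul p (qscale s g))
      = qscale (s ^+ 2) (qmul (qconj g) (qmul p g)) by qsolve.
  rewrite /qnormalize scaled hg.
  by apply: quatP => /=; rewrite ?mulr0 // mulrA (sqrt_inv_sq g0) mul1r.
case: p => a b c d; set m := imnorm (Quat a b c d).
have hm : m ^+ 2 = b ^+ 2 + c ^+ 2 + d ^+ 2 by rewrite imnorm_sq.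
have m0 : 0 <= m by exact: imnorm_ge0.
pose g := Quat 0 (b + m) c d.
have [gz|gnz] := eqVneq (nq g) 0.
  (* Im p is a nonpositive multiple of i: rotate by j *)
  case: (nq_eq0 gz) => hb hc hd.
  exists (Quat 0 0 1 0); split; first by rewrite /nq /=; lra.
  by rewrite /qhat -/m; apply: quatP; rewrite /nq /= hc hd; lra.
exists g; split; first by rewrite lt_def gnz nq_ge0.
have rot : qmul (Quat 0 b c d) g = qmul g (Quat 0 m 0 0) by apply: quatP => /=; lra.
have -> : qmul (Quat a b c d) g = qadd (qscale a g) (qmul g (Quat 0 m 0 0)).
  by rewrite -rot; qsolve.
by rewrite /qhat -/m /nq /g; apply: quatP => /=; ring.
Qed.

End Quaternions.

Section NumericalRange.
Variables (R : rcfType) (n : nat).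
Implicit Types (A B : 'M[quat R]_n) (p g : quat R).

Lemma qsum_conjugate g m (F : 'I_m -> quat R) :
  qmul (qconj g) (qmul (\big[@qadd R/qzero R]_(i < m) F i) g)
  = \big[@qadd R/qzero R]_(i < m) qmul (qconj g) (qmul (F i) g).
Proof. by apply: (big_morph (fun s => qmul (qconj g) (qmul s g))) => [s t|]; qsolve. Qed.

(* W(A) is invariant under conjugation by unit quaternions: replace the
   unit vector x by x g. *)
Lemma numrange_conjugate A p g :
  nq g = 1 -> numrange A p -> numrange A (qmul (qconj g) (qmul p g)).
Proof.
move=> hg [x [hx hA]]; exists (fun i => qmul (x i) g); split.
  transitivity (qmul (qconj g) (qmul (qdot x x) g)).
    by rewrite /qdot qsum_conjugate; apply: eq_bigr => i _; qsolve.
  by rewrite hx -[in RHS]hg; qsolve.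
rewrite -hA /qform qsum_conjugate; apply: eq_bigr => i _.
by rewrite qsum_conjugate; apply: eq_bigr => j _; qsolve.
Qed.

Lemma numrange_qhat A p : numrange A (qhat p) <-> numrange A p.
Proof.
have [g [hg <-]] := qhat_similar p; split; last exact: numrange_conjugate.
have undo : qmul (qconj (qconj g)) (qmul (qmul (qconj g) (qmul p g)) (qconj g))
    = qscale (nq g ^+ 2) p by qsolve.
by move/(numrange_conjugate (g := qconj g)); rewrite undo hg expr1n qscale1 nq_conj; apply.
Qed.

Lemma numrange_diag_similar A B (u : 'I_n -> quat R) p :
  (forall i, nq (u i) = 1) ->
  (forall i j, B i j = qmul (qmul (qconj (u i)) (A i j)) (u j)) ->
  numrange A p <-> numrange B p.
Proof.
move=> hu hB.
have unit_norm (a y : quat R) :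
    nq a = 1 -> qmul (qconj (qmul a y)) (qmul a y) = qmul (qconj y) y.
  by move=> ha; rewrite -[RHS]qscale1 -ha; qsolve.
split.
- move=> [x [hx hA]]; exists (fun i => qmul (qconj (u i)) (x i)); split.
    by rewrite -hx /qdot; apply: eq_bigr => i _; rewrite unit_norm ?nq_conj.
  rewrite -hA /qform; apply: eq_bigr => i _; apply: eq_bigr => j _.
  have -> : qmul (qconj (qmul (qconj (u i)) (x i))) (qmul (B i j) (qmul (qconj (u j)) (x j)))
      = qscale (nq (u i) * nq (u j)) (qmul (qconj (x i)) (qmul (A i j) (x j))).
    by rewrite hB; qsolve.
  by rewrite !hu mulr1 qscale1.
- move=> [y [hy hBy]]; exists (fun i => qmul (u i) (y i)); split.
    by rewrite -hy /qdot; apply: eq_bigr => i _; rewrite unit_norm.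
  by rewrite -hBy /qform; apply: eq_bigr => i _; apply: eq_bigr => j _; rewrite hB; qsolve.
Qed.

End NumericalRange.

(* For w > 0 the real quadratics d s = (1-s)^2 + s^2 w + s(1-s) r and
   e s = s^2 w + s(1-s) k satisfy e 0 = 0 * d 0 and e 1 = 1 * d 1, so by the
   intermediate value theorem e s = t * d s for some s in [0, 1], whenever
   t is in [0, 1]. *)
Lemma quadratic_crossing (R : rcfType) (w k r t : R) : 0 < w -> 0 <= t <= 1 ->
  exists2 s, 0 <= s <= 1 &
    s ^+ 2 * w + s * (1 - s) * k = t * ((1 - s) ^+ 2 + s ^+ 2 * w + s * (1 - s) * r).
Proof.
move=> w0 /andP [t0 t1].
pose h : {poly R} := 'X^2 * w%:P + 'X * (1 - 'X) * k%:P
   - t%:P * ((1 - 'X) ^+ 2 + 'X^2 * w%:P + 'X * (1 - 'X) * r%:P).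
have hE s : h.[s] = s ^+ 2 * w + s * (1 - s) * k
   - t * ((1 - s) ^+ 2 + s ^+ 2 * w + s * (1 - s) * r) by rewrite /h !hornerE.
have [s s01 /rootP hs] : exists2 s, 0 <= s <= 1 & root h s.
  apply: poly_ivt; first exact: ler01.
  by rewrite !hE; apply/andP; split; nra.
by exists s => //; apply/eqP; rewrite -subr_eq0 -hE hs.
Qed.

Section ComplexNumericalRange.
Variable R : rcfType.
Local Notation C := R[i].
Local Notation Re := (@complex.Re R).
Local Notation Im := (@complex.Im R).
Local Open Scope complex_scope.
Implicit Types (z w : C) (c s t : R).

Lemma complexP z w : Re z = Re w -> Im z = Im w -> z = w.
Proof. by case: z => a b; case: w => c d /= -> ->. Qed.

Lemma ReD z w : Re (z + w) = Re z + Re w. Proof. by case: z; case: w. Qed.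
Lemma ImD z w : Im (z + w) = Im z + Im w. Proof. by case: z; case: w. Qed.
Lemma ReM z w : Re (z * w) = Re z * Re w - Im z * Im w. Proof. by case: z; case: w. Qed.
Lemma ImM z w : Im (z * w) = Re z * Im w + Im z * Re w. Proof. by case: z; case: w. Qed.
Lemma ReN z : Re (- z) = - Re z. Proof. by case: z. Qed.
Lemma ImN z : Im (- z) = - Im z. Proof. by case: z. Qed.
Lemma ReJ z : Re (conjc z) = Re z. Proof. by case: z. Qed.
Lemma ImJ z : Im (conjc z) = - Im z. Proof. by case: z. Qed.

Lemma Re_sum n (F : 'I_n -> C) : Re (\sum_(i < n) F i) = \sum_(i < n) Re (F i).
Proof. exact: (big_morph _ ReD). Qed.
Lemma Im_sum n (F : 'I_n -> C) : Im (\sum_(i < n) F i) = \sum_(i < n) Im (F i).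
Proof. exact: (big_morph _ ImD). Qed.

Lemma conjcM z w : conjc (z * w) = conjc z * conjc w.
Proof. by apply: complexP; rewrite ?ReJ ?ImJ ?ReM ?ImM ?ReJ ?ImJ; ring. Qed.

Lemma conjc_mul_self z : conjc z * z = (Re z ^+ 2 + Im z ^+ 2)%:C.
Proof. by apply: complexP; rewrite ?ReM ?ImM ReJ ImJ /=; ring. Qed.

Lemma real_complex1 : 1%:C = 1 :> C. Proof. by []. Qed.
Lemma real_complexD (a b : R) : (a + b)%:C = a%:C + b%:C :> C.
Proof. by apply: complexP; rewrite /= ?addr0. Qed.
Lemma real_complexB (a b : R) : (a - b)%:C = a%:C - b%:C :> C.
Proof. by apply: complexP; rewrite /= ?subr0. Qed.
Lemma real_complexM (a b : R) : (a * b)%:C = a%:C * b%:C :> C.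
Proof. by apply: complexP; rewrite ?ReM ?ImM /=; ring. Qed.
Lemma real_complexX (a : R) : (a ^+ 2)%:C = a%:C ^+ 2 :> C.
Proof. by rewrite !expr2 real_complexM. Qed.

Lemma complex_comb (t a b c d : R) : (1 - t)%:C * Complex a b + t%:C * Complex c d
  = Complex ((1 - t) * a + t * c) ((1 - t) * b + t * d).
Proof. by apply: complexP; rewrite ?ReD ?ImD ?ReM ?ImM /=; ring. Qed.

Lemma real_complexE z : Im z = 0 -> z = (Re z)%:C.
Proof. by case: z => a b /= ->. Qed.

(* Some nonzero w makes w be + conj(w) ga real: take w = conj(be - conj ga). *)
Lemma rotate_to_real (be ga : C) : exists2 w, w != 0 & Im (w * be + conjc w * ga) = 0.
Proof.
set de := be - conjc ga.
have key w : Im (w * be + conjc w * ga) = Im (w * de).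
  by rewrite /de !(ImD, ImM, ReD, ImN, ReN, ReJ, ImJ); ring.
exists (if de == 0 then 1 else conjc de); rewrite ?key.
  by case: ifP => [_|/negbT]; rewrite ?oner_neq0 ?conjc_eq0.
by case: ifP => [/eqP ->|_]; rewrite ?mulr0 // conjc_mul_self.
Qed.

Definition cconvex (S : C -> Prop) :=
  forall z1 z2 t, S z1 -> S z2 -> 0 <= t <= 1 -> S ((1 - t)%:C * z1 + t%:C * z2).

Section Forms.
Variable n : nat.
Implicit Types (x y : 'I_n -> C) (M : 'I_n -> 'I_n -> C) (a b : C).

Definition cdot x y : C := \sum_(i < n) conjc (x i) * y i.
Definition cform M x y : C := \sum_(i < n) \sum_(j < n) conjc (x i) * M i j * y j.
Definition cnumrange M (zeta : C) := exists x, cdot x x = 1 /\ cform M x x = zeta.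

Lemma cdot_sym x y : conjc (cdot x y) = cdot y x.
Proof. by rewrite rmorph_sum; apply: eq_bigr => i _; rewrite rmorphM /= conjcK mulrC. Qed.

Lemma cdot_selfE x : cdot x x = (\sum_(i < n) (Re (x i) ^+ 2 + Im (x i) ^+ 2))%:C.
Proof. by rewrite rmorph_sum; apply: eq_bigr => i _; rewrite conjc_mul_self. Qed.

Lemma cdot_self_real x : cdot x x = (Re (cdot x x))%:C.
Proof. by rewrite cdot_selfE. Qed.

Lemma cdot_self_ge0 x : 0 <= Re (cdot x x).
Proof. by rewrite cdot_selfE /=; apply: sumr_ge0 => i _; rewrite addr_ge0 ?sqr_ge0. Qed.

Lemma cdot_self_eq0 x : Re (cdot x x) = 0 -> forall i, x i = 0.
Proof.
rewrite cdot_selfE /= => /eqP; rewrite psumr_eq0 => [/allP h i|i _]; last first.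
  by rewrite addr_ge0 ?sqr_ge0.
move/implyP: (h i (mem_index_enum i)) => /(_ isT) /eqP e.
by apply: complexP => /=; nra.
Qed.

Lemma cform_comb M a x b y :
  cform M (fun i => a * x i + b * y i) (fun i => a * x i + b * y i) =
  conjc a * a * cform M x x + conjc a * b * cform M x y
  + conjc b * a * cform M y x + conjc b * b * cform M y y.
Proof.
rewrite /cform !mulr_sumr -!big_split /=; apply: eq_bigr => i _.
rewrite !mulr_sumr -!big_split /=; apply: eq_bigr => j _.
by rewrite rmorphD !rmorphM; ring.
Qed.

Lemma cdot_comb a x b y :
  cdot (fun i => a * x i + b * y i) (fun i => a * x i + b * y i) =
  conjc a * a * cdot x x + conjc a * b * cdot x y
  + conjc b * a * cdot y x + conjc b * b * cdot y y.
Proof.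
rewrite /cdot !mulr_sumr -!big_split /=; apply: eq_bigr => i _.
by rewrite rmorphD !rmorphM; ring.
Qed.

Lemma cform_scale M a x :
  cform M (fun i => a * x i) (fun i => a * x i) = conjc a * a * cform M x x.
Proof.
rewrite /cform mulr_sumr; apply: eq_bigr => i _; rewrite mulr_sumr.
by apply: eq_bigr => j _; rewrite rmorphM; ring.
Qed.

Lemma cdot_scale a x :
  cdot (fun i => a * x i) (fun i => a * x i) = conjc a * a * cdot x x.
Proof. by rewrite /cdot mulr_sumr; apply: eq_bigr => i _; rewrite rmorphM; ring. Qed.

Lemma cnumrange_scale M x c zeta :
  0 < c -> cdot x x = c%:C -> cform M x x = c%:C * zeta -> cnumrange M zeta.
Proof.
move=> c0 hN hF; set k := (Num.sqrt c)^-1.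
have kk : conjc k%:C * k%:C * c%:C = 1.
  by rewrite conjc_real -!real_complexM -expr2 sqrt_inv_sq.
exists (fun i => k%:C * x i); split; first by rewrite cdot_scale hN.
by rewrite cform_scale hF mulrA kk mul1r.
Qed.

Lemma cnumrange_conj M zeta :
  (forall i j, conjc (M i j) = M i j) -> cnumrange M zeta -> cnumrange M (conjc zeta).
Proof.
move=> hM [x [hx hF]]; exists (fun i => conjc (x i)); split.
  by rewrite -hx /cdot; apply: eq_bigr => i _; rewrite conjcK mulrC.
rewrite -hF /cform rmorph_sum; apply: eq_bigr => i _; rewrite rmorph_sum.
by apply: eq_bigr => j _; rewrite !rmorphM /= hM conjcK.
Qed.

Lemma unit_vectors_independent M x y a b :
  cdot x x = 1 -> cdot y y = 1 -> cform M x x != cform M y y ->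
  (forall i, a * x i + b * y i = 0) -> a = 0 /\ b = 0.
Proof.
move=> hx hy hne hz; have [b0|b0] := eqVneq b 0.
  split=> //; apply/eqP.
  have : conjc a * a * cdot x x = 0.
    rewrite -cdot_scale /cdot big1 // => i _.
    by move: (hz i); rewrite b0 mul0r addr0 => ->; rewrite mulr0.
  by rewrite hx mulr1 => /eqP; rewrite mulf_eq0 conjc_eq0 orbb.
exfalso; move/negP: hne; apply; set c := - a / b.
have yc i : y i = c * x i.
  apply: (mulfI b0); move/eqP: (hz i); rewrite addrC addr_eq0 => /eqP ->.
  by rewrite /c mulrA [b * _]mulrC divfK // mulNr.
have : cdot y y = conjc c * c * cdot x x.
  by rewrite -cdot_scale; apply: eq_bigr => i _; rewrite yc.
rewrite hx hy mulr1 => cc.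
suff -> : cform M y y = conjc c * c * cform M x x by rewrite -cc mul1r.
by rewrite -cform_scale; apply: eq_bigr => i _; apply: eq_bigr => j _; rewrite !yc.
Qed.

(* the vectors z s = (1 - s) x + s w y along which Toeplitz-Hausdorff moves *)
Definition segment x y (w : C) s i := (1 - s)%:C * x i + (s%:C * w) * y i.

Lemma segment_norm x y w s : cdot x x = 1 -> cdot y y = 1 ->
  cdot (segment x y w s) (segment x y w s) = (1 - s)%:C ^+ 2
  + s%:C ^+ 2 * (conjc w * w) + s%:C * (1 - s)%:C * (w * cdot x y + conjc w * cdot y x).
Proof. by move=> hx hy; rewrite cdot_comb hx hy !conjcM !conjc_real; ring. Qed.

Lemma segment_excess M x y w s : cdot x x = 1 -> cdot y y = 1 ->
  cform M (segment x y w s) (segment x y w s)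
    - cform M x x * cdot (segment x y w s) (segment x y w s)
  = s%:C ^+ 2 * (conjc w * w) * (cform M y y - cform M x x)
    + s%:C * (1 - s)%:C * (w * (cform M x y - cform M x x * cdot x y)
                           + conjc w * (cform M y x - cform M x x * cdot y x)).
Proof. by move=> hx hy; rewrite cform_comb segment_norm // !conjcM !conjc_real; ring. Qed.

(* For unit
   vectors x, y with values P != Q, choosing w by rotate_to_real makes
   |z s|^2 and (z s^* M z s - P |z s|^2) / (Q - P) real quadratics in s
   (z = segment x y w); quadratic_crossing picks s where their ratio is t,
   and z s is nonzero by unit_vectors_independent. *)
Lemma cnumrange_convex M : cconvex (cnumrange M).
Proof.
move=> z1 z2 t [x [hx <-]] [y [hy <-]] t01.
set P := cform M x x; set Q := cform M y y.
have [PQ|PQ] := eqVneq P Q.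
  by exists x; split => //; rewrite -PQ -/P real_complexB real_complex1; ring.
set al := Q - P; have al0 : al != 0 by rewrite subr_eq0 eq_sym.
set be := (cform M x y - P * cdot x y) / al.
set ga := (cform M y x - P * cdot y x) / al.
have [w w0 ka_real] := rotate_to_real be ga.
set ka := w * be + conjc w * ga in ka_real.
set sg := w * cdot x y + conjc w * cdot y x.
have sg_real : Im sg = 0.
  rewrite /sg; have -> : conjc w * cdot y x = conjc (w * cdot x y) by rewrite rmorphM /= cdot_sym.
  by rewrite ImD ImJ subrr.
set wr := Re (conjc w * w).
have ww : conjc w * w = wr%:C by apply: real_complexE; rewrite conjc_mul_self.
have wr0 : 0 < wr.
  rewrite lt_def /wr conjc_mul_self /= addr_ge0 ?sqr_ge0 // andbT.
  apply: contraNneq w0 => wr_eq0; have : conjc w * w = 0 by rewrite conjc_mul_self wr_eq0.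
  by move/eqP; rewrite mulf_eq0 conjc_eq0 orbb.
pose z := segment x y w.
have norm_z s : cdot (z s) (z s) = ((1 - s) ^+ 2 + s ^+ 2 * wr + s * (1 - s) * Re sg)%:C.
  rewrite segment_norm // -/sg ww (real_complexE sg_real).
  by rewrite !(real_complexB, real_complexD, real_complexM, real_complexX, real_complex1); ring.
have form_z s : cform M (z s) (z s) - P * cdot (z s) (z s) =
    al * (s ^+ 2 * wr + s * (1 - s) * Re ka)%:C.
  rewrite segment_excess // -/P -/Q -/al ww -[_ - P * _](divfK al0) -/be.
  rewrite -[cform M y x - _](divfK al0) -/ga.
  rewrite !(real_complexB, real_complexD, real_complexM, real_complexX, real_complex1).
  by rewrite -(real_complexE ka_real) /ka; ring.
have [s s01 hs] := quadratic_crossing (Re ka) (Re sg) wr0 t01.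
set nn := (1 - s) ^+ 2 + s ^+ 2 * wr + s * (1 - s) * Re sg in hs norm_z.
have nn0 : 0 < nn.
  rewrite lt_def; have := cdot_self_ge0 (z s); rewrite norm_z /= => ->; rewrite andbT.
  apply/eqP => /esym nz.
  have zs0 : forall i, z s i = 0 by apply: cdot_self_eq0; rewrite norm_z nz.
  have [/(congr1 Re) /= s1 /eqP] := unit_vectors_independent hx hy PQ zs0.
  rewrite mulf_eq0 (negbTE w0) orbF => /eqP /(congr1 Re) /= s0.
  by move: s1; rewrite s0 subr0 => /eqP; rewrite oner_eq0.
apply: (@cnumrange_scale M (z s) nn) => //.
move/eqP: (form_z s); rewrite hs norm_z -/nn subr_eq => /eqP ->.
by rewrite /al real_complexM real_complexB real_complex1; ring.
Qed.

(* If |a|^2 + |e|^2 = 1, then a^* M a + e^* M e lies in W(M): it is a convex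
   combination of the values at a / |a| and e / |e|. *)
Lemma cnumrange_split M (a e : 'I_n -> C) :
  cdot a a + cdot e e = 1 -> cnumrange M (cform M a a + cform M e e).
Proof.
move=> hae; set al := Re (cdot a a); set be := Re (cdot e e).
have albe : al + be = 1 by have := congr1 Re hae; rewrite ReD.
have form0 x : (forall i, x i = 0) -> cform M x x = 0.
  by move=> x0; rewrite /cform big1 // => i _; rewrite big1 // => j _; rewrite !x0; ring.
have [a0|a0] := eqVneq al 0.
  rewrite (form0 a (cdot_self_eq0 a0)) add0r; exists e; split => //.
  by rewrite -hae (cdot_self_real a) -/al a0 add0r.
have [e0|e0] := eqVneq be 0.
  rewrite (form0 e (cdot_self_eq0 e0)) addr0; exists a; split => //.
  by rewrite -hae (cdot_self_real e) -/be e0 addr0.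
have alC : al%:C != 0 by apply: contraNneq a0 => /(congr1 Re) /= ->.
have beC : be%:C != 0 by apply: contraNneq e0 => /(congr1 Re) /= ->.
have al_gt0 : 0 < al by rewrite lt_def a0 cdot_self_ge0.
have be_gt0 : 0 < be by rewrite lt_def e0 cdot_self_ge0.
have Wa : cnumrange M (cform M a a / al%:C).
  by apply: (@cnumrange_scale M a al) => //; [exact: cdot_self_real | rewrite mulrC divfK].
have We : cnumrange M (cform M e e / be%:C).
  by apply: (@cnumrange_scale M e be) => //; [exact: cdot_self_real | rewrite mulrC divfK].
have be01 : 0 <= be <= 1 by rewrite (ltW be_gt0) /= -albe lerDr ltW.
have := cnumrange_convex Wa We be01.
have -> : 1 - be = al by rewrite -albe addrK.
by rewrite ![_%:C * (_ / _)]mulrC !divfK.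
Qed.

End Forms.
End ComplexNumericalRange.

Section ComplexPicture.
Variable R : rcfType.
Local Notation C := R[i].
Local Notation Re := (@complex.Re R).
Local Notation Im := (@complex.Im R).
Local Open Scope complex_scope.
Implicit Types (p q : quat R) (S : C -> Prop).

Lemma imnorm_comb p q (a b : R) : 0 <= a -> 0 <= b ->
  a * imnorm p - b * imnorm q <= imnorm (qadd (qscale a p) (qscale b q))
  <= a * imnorm p + b * imnorm q.
Proof.
move=> a0 b0; set X := imnorm (qadd _ _).
have hX := imnorm_sq (qadd (qscale a p) (qscale b q)); rewrite -/X /= in hX.
have hA := imnorm_sq p; have hB := imnorm_sq q.
have X0 : 0 <= X := imnorm_ge0 _.
have A0 := imnorm_ge0 p; have B0 := imnorm_ge0 q.
set A := imnorm p in hA A0 *; set B := imnorm q in hB B0 *.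
set dot := q1 p * q1 q + q2 p * q2 q + q3 p * q3 q.
have cauchy_schwarz : dot ^+ 2 <= (A * B) ^+ 2.
  rewrite exprMn hA hB /dot.
  have : 0 <= (q2 p * q3 q - q3 p * q2 q) ^+ 2 + (q3 p * q1 q - q1 p * q3 q) ^+ 2
       + (q1 p * q2 q - q2 p * q1 q) ^+ 2 by rewrite !addr_ge0 // sqr_ge0.
  by move=> h; nra.
have AB0 : 0 <= A * B by rewrite mulr_ge0.
have eX : X ^+ 2 = a ^+ 2 * A ^+ 2 + b ^+ 2 * B ^+ 2 + 2 * a * b * dot.
  by rewrite hX hA hB /dot; ring.
have abd1 : a * b * dot <= a * b * (A * B).
  by rewrite ler_wpM2l ?mulr_ge0 //; nra.
have abd2 : - (a * b * dot) <= a * b * (A * B).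
  by rewrite -mulrN ler_wpM2l ?mulr_ge0 //; nra.
have lower : (a * A - b * B) ^+ 2 <= X ^+ 2.
  have -> : (a * A - b * B) ^+ 2
      = a ^+ 2 * A ^+ 2 + b ^+ 2 * B ^+ 2 - 2 * (a * b * (A * B)) by ring.
  by rewrite eX; lra.
have upper : X ^+ 2 <= (a * A + b * B) ^+ 2.
  have -> : (a * A + b * B) ^+ 2
      = a ^+ 2 * A ^+ 2 + b ^+ 2 * B ^+ 2 + 2 * (a * b * (A * B)) by ring.
  by rewrite eX; lra.
apply/andP; split.
  have [neg|pos] := lerP (a * A - b * B) 0; first exact: le_trans neg X0.
  by rewrite -ler_sqr ?nnegrE ?(ltW pos).
by rewrite -ler_sqr ?nnegrE ?addr_ge0 ?mulr_ge0.
Qed.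

Lemma cconvex_vertical S (a lo m hi : R) : cconvex S ->
  S (Complex a lo) -> S (Complex a hi) -> lo <= m <= hi -> S (Complex a m).
Proof.
move=> hS hlo hhi /andP [lom mhi].
have [e|ne] := eqVneq lo hi.
  by rewrite -e in mhi; have -> : m = lo by apply: le_anti; rewrite mhi lom.
set la := (m - lo) / (hi - lo).
have hilo : 0 < hi - lo by rewrite subr_gt0 lt_def eq_sym ne (le_trans lom).
have hla : la * (hi - lo) = m - lo by rewrite divfK // gt_eqF.
have la01 : 0 <= la <= 1.
  apply/andP; split; first by apply: divr_ge0; [rewrite subr_ge0 | exact: ltW].
  by rewrite ler_pdivrMr // mul1r lerD2r.
have := hS _ _ la hlo hhi la01; rewrite complex_comb.
have -> : (1 - la) * a + la * a = a by ring.
by have -> : (1 - la) * lo + la * hi = m by rewrite -[m](subrK lo) -hla; ring.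
Qed.

Lemma qconvex_of_complex S : cconvex S -> (forall z, S z -> S (conjc z)) ->
  qconvex (fun p => S (Complex (q0 p) (imnorm p))).
Proof.
move=> hS hJ p q t hp hq t01; have /andP [t0 t1] := t01.
set T := qadd (qscale (1 - t) p) (qscale t q).
suff : S (Complex (q0 T) (imnorm T)) by [].
have t10 : 0 <= 1 - t by rewrite subr_ge0.
have := imnorm_comb p q t10 t0; rewrite -/T => hLU.
apply: (cconvex_vertical hS _ _ hLU).
  by have := hS _ _ t hp (hJ _ hq) t01; rewrite complex_comb mulrN.
by have := hS _ _ t hp hq t01; rewrite complex_comb.
Qed.

End ComplexPicture.

Section RealMatrices.
Variables (R : rcfType) (n : nat) (B : 'M[quat R]_n).
Hypothesis B_real : forall i j, B i j = qreal (q0 (B i j)).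
Local Notation C := R[i].
Local Notation Re := (@complex.Re R).
Local Notation Im := (@complex.Im R).
Local Open Scope complex_scope.
Implicit Types (p : quat R) (x : 'I_n -> C).

Let Bc i j : C := (q0 (B i j))%:C.

Definition qcomplex (z : C) : quat R := Quat (Re z) (Im z) 0 0.

Lemma qcomplexD z w : qcomplex (z + w) = qadd (qcomplex z) (qcomplex w).
Proof. by apply: quatP; rewrite /= ?ReD ?ImD ?addr0. Qed.

Lemma qdot_qcomplex x :
  qdot (fun i => qcomplex (x i)) (fun i => qcomplex (x i)) = qcomplex (cdot x x).
Proof.
rewrite /qdot /cdot (big_morph _ qcomplexD (erefl : qcomplex 0 = qzero R)).
by apply: eq_bigr => i _; case: (x i) => u v; apply: quatP => /=; ring.
Qed.

Lemma qform_qcomplex x :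
  qform B (fun i => qcomplex (x i)) = qcomplex (cform Bc x x).
Proof.
rewrite /qform /cform (big_morph _ qcomplexD (erefl : qcomplex 0 = qzero R)).
apply: eq_bigr => i _; rewrite (big_morph _ qcomplexD (erefl : qcomplex 0 = qzero R)).
apply: eq_bigr => j _; rewrite B_real /Bc /=.
by case: (x i) (x j) (q0 (B i j)) => [u v] [u' v'] b; apply: quatP => /=; ring.
Qed.

Lemma numrange_qcomplex z : cnumrange Bc z -> numrange B (qcomplex z).
Proof.
move=> [x [hx hF]]; exists (fun i => qcomplex (x i)).
by rewrite qdot_qcomplex qform_qcomplex hx hF.
Qed.

(* Conversely a point of W(B) in the plane R + R i lies in W_C(B): writing
   x = a + e j with complex vectors a, e, the value x^* B x has the same
   complex part as a^* B a + e^* B e, and |a|^2 + |e|^2 = 1. *)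
Lemma cnumrange_of_numrange p : numrange B p -> q2 p = 0 -> q3 p = 0 ->
  cnumrange Bc (Complex (q0 p) (q1 p)).
Proof.
move=> [x [hx hp]] p2 p3.
pose a i := Complex (q0 (x i)) (q1 (x i)).
pose e i := Complex (q2 (x i)) (- q3 (x i)).
have hae : cdot a a + cdot e e = 1.
  apply: complexP; last by rewrite ImD (cdot_self_real a) (cdot_self_real e) /= addr0.
  transitivity (q0 (qdot x x)); last by rewrite hx.
  rewrite ReD /cdot !Re_sum -big_split /qdot q0_sum.
  by apply: eq_bigr => i _; rewrite ?(ReM, ImM, ReJ, ImJ) /=; ring.
rewrite (_ : Complex _ _ = cform Bc a a + cform Bc e e); first exact: cnumrange_split.
apply: complexP; rewrite -hp /qform ?q0_sum ?q1_sum /cform ?ReD ?ImD !(Re_sum, Im_sum);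
  rewrite -big_split; apply: eq_bigr => i _ /=;
  rewrite ?q0_sum ?q1_sum !(Re_sum, Im_sum) -big_split; apply: eq_bigr => j _ /=;
  rewrite B_real /Bc ?(ReM, ImM, ReJ, ImJ) /=; ring.
Qed.

Lemma numrange_realE p : numrange B p <-> cnumrange Bc (Complex (q0 p) (imnorm p)).
Proof.
split => hp; last by apply/numrange_qhat; exact: numrange_qcomplex hp.
exact: (cnumrange_of_numrange (proj2 (numrange_qhat B p) hp)).
Qed.

Lemma numrange_real_convex : qconvex (numrange B).
Proof.
have Bc_real i j : conjc (Bc i j) = Bc i j by rewrite conjc_real.
have hS := qconvex_of_complex (@cnumrange_convex R n Bc)
  (fun z => cnumrange_conj (zeta := z) Bc_real).
move=> p q t hp hq ht; apply/numrange_realE.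
by apply: hS ht; apply/numrange_realE.
Qed.

End RealMatrices.

Section Forest.
Variables (T : finType) (E : rel T).
Hypotheses (E_sym : symmetric E) (E_irr : irreflexive E).
Hypothesis E_acyclic : forall s : seq T, uniq s -> (3 <= size s)%N -> ~~ cycle E s.

(* The first vertex x of a simple path x :: s in S either has no neighbour in
   S besides the next vertex of the path, or has a neighbour in S outside the
   path (a neighbour further along the path would close a cycle). *)
Lemma path_start_extends (S : {set T}) x s :
  uniq (x :: s) -> path E x s -> {subset x :: s <= S} ->
  (forall k, k \in S -> E x k -> k = head x s) \/
  (exists2 w, w \in S & (w \notin x :: s) && E w x).
Proof.
move=> hu hp hS.
have [/existsP [w /and3P [wS xw wy]]|none] :=
  boolP [exists w, [&& w \in S, E x w & w != head x s]]; last first.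
  left=> k kS xk; apply/eqP; move/existsPn: none => /(_ k).
  by rewrite kS xk /= negbK.
right; exists w => //; rewrite E_sym xw andbT.
apply/negP => win; have wx : w != x by apply: contraTneq xw => ->; rewrite E_irr.
move: win; rewrite inE (negbTE wx) /=.
case: s hu hp hS wy => [//|y s] hu hp _ /= wy.
rewrite inE (negbTE wy) /= => win.
move: hu hp; case/splitPr: win => s1 s2 hu hp.
have U : uniq (x :: y :: rcons s1 w).
  by move: hu; rewrite -cat_rcons -!cat_cons cat_uniq => /andP [].
have := E_acyclic U (_ : (3 <= size (x :: y :: rcons s1 w))%N).
rewrite /= size_rcons => /(_ isT); apply/negP; rewrite negbK.
rewrite /cycle rcons_path /= last_rcons (E_sym w x) xw andbT -cats1 cat_path /=.
by move: hp => /= /andP [-> ]; rewrite cat_path => /andP [-> /=] /andP [-> _].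
Qed.

(* Every nonempty vertex set S of a forest has a vertex l with at most one
   neighbour k in S: extend a simple path in S from its start until this is
   the case, which happens within #|T| steps. *)
Lemma low_degree_vertex (S : {set T}) x : x \in S ->
  exists l k, l \in S /\ forall k', k' \in S -> E l k' -> k' = k.
Proof.
move=> xS; suff grow m : forall x s, (#|T| - size (x :: s) <= m)%N ->
    uniq (x :: s) -> path E x s -> {subset x :: s <= S} ->
    exists l k, l \in S /\ forall k', k' \in S -> E l k' -> k' = k.
  apply: (grow #|T| x [::]) => //; first by rewrite leq_subr.
  by move=> z; rewrite inE => /eqP ->.
have short (s' : seq T) : uniq s' -> (size s' <= #|T|)%N.
  by move=> hu; rewrite cardE uniq_leq_size // => z _; rewrite mem_enum.
elim: m => [|m IH] y s hsz hu hp hS;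
  case: (path_start_extends hu hp hS) => [hy|[w wS /andP [wn wy]]].
- by exists y, (head y s); split => //; apply: hS; rewrite inE eqxx.
- have := short (w :: y :: s); rewrite cons_uniq wn hu => /(_ isT).
  by move: hsz => /=; lia.
- by exists y, (head y s); split => //; apply: hS; rewrite inE eqxx.
- have hu' : uniq (w :: y :: s) by rewrite cons_uniq wn hu.
  apply: (IH w (y :: s)) => //.
  + by move: hsz (short _ hu') => /=; lia.
  + by rewrite /= wy.
  + by move=> z; rewrite inE => /orP [/eqP -> //|]; apply: hS.
Qed.

End Forest.

Section Gauge.
Variables (R : rcfType) (n : nat) (N : 'M[quat R]_n).
Hypotheses (N_upper : strictly_upper N) (N_cf : cycle_free N).
Implicit Types (p w : quat R) (u : 'I_n -> quat R).

Definition real_quat p := p = qreal (q0 p).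

Lemma real_quat_conj p : real_quat p -> real_quat (qconj p).
Proof. by rewrite /real_quat => ->; apply: quatP; rewrite /= ?oppr0. Qed.

Lemma real_quat_add p w : real_quat p -> real_quat w -> real_quat (qadd p w).
Proof. by rewrite /real_quat => hp hw; rewrite hp hw; qsolve. Qed.

Definition gauged u i j := qmul (qmul (qconj (u i)) (N i j)) (u j).

(* N i j and the conjugate of N j i together, at most one being nonzero *)
Definition edge_entry i j := qadd (N i j) (qconj (N j i)).

Lemma no_edge i j : ~~ mx_graph N i j -> N i j = qzero R /\ N j i = qzero R.
Proof. by rewrite /mx_graph negb_or => /andP [/negPn /eqP -> /negPn /eqP ->]. Qed.

(* Since N is strictly upper triangular, making the edge entry of {i, j}
   real makes both gauged entries (i, j) and (j, i) real. *)
Lemma gauged_pair u i j :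
  real_quat (qmul (qmul (qconj (u i)) (edge_entry i j)) (u j)) ->
  real_quat (gauged u i j) /\ real_quat (gauged u j i).
Proof.
rewrite /gauged /edge_entry; have [ji|ij] := leqP j i.
  rewrite (N_upper ji) => h; split; first by rewrite /real_quat; qsolve.
  have -> : qmul (qmul (qconj (u j)) (N j i)) (u i)
     = qconj (qmul (qmul (qconj (u i)) (qadd (qzero R) (qconj (N j i)))) (u j)) by qsolve.
  exact: real_quat_conj.
rewrite (N_upper (ltnW ij)) => h; split; last by rewrite /real_quat; qsolve.
by move: h; congr real_quat; qsolve.
Qed.

Lemma unit_align b : exists w, nq w = 1 /\ real_quat (qmul (qconj w) b).
Proof.
have [b0|b0] := eqVneq (nq b) 0.
  exists (qreal 1); split; first by rewrite /nq /=; ring.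
  by rewrite (nq_eq0 b0) /real_quat; qsolve.
have bpos : 0 < nq b by rewrite lt_def b0 nq_ge0.
exists (qnormalize b); split; first exact: nq_qnormalize.
by rewrite /qnormalize /real_quat; move: (_^-1) => s; qsolve.
Qed.

(* Gauge a set S of indices by induction on #|S|: remove a vertex l with at
   most one neighbour k in S, gauge the rest, then choose u l to make the
   edge entry of {l, k} real. *)
Lemma gauge_set (S : {set 'I_n}) : exists u, (forall i, nq (u i) = 1) /\
  forall i j, i \in S -> j \in S -> real_quat (gauged u i j).
Proof.
have [E_sym E_irr] : symmetric (mx_graph N) /\ irreflexive (mx_graph N).
  by split=> [i j|i]; [rewrite /mx_graph orbC | apply/negbTE; case: N_cf].
have gauge0 : exists u, (forall i, nq (u i) = 1) /\
    forall i j, i \in set0 -> j \in set0 -> real_quat (gauged u i j).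
  by exists (fun=> qreal 1); split=> [i|i j]; rewrite ?inE // /nq /=; ring.
elim: #|S| {-2}S (leqnn #|S|) => [|m IH] {}S hS.
  by move: hS; rewrite leqn0 cards_eq0 => /eqP ->.
have [->//|/set0Pn [x xS]] := eqVneq S set0.
have [l [k [lS lk]]] := low_degree_vertex E_sym E_irr (proj2 N_cf) xS.
have [u [hu hr]] : exists u, (forall i, nq (u i) = 1) /\
    forall i j, i \in S :\ l -> j \in S :\ l -> real_quat (gauged u i j).
  by apply: IH; move: hS; rewrite (cardsD1 l S) lS.
have [w [hw wr]] := unit_align (qmul (edge_entry l k) (u k)).
pose u' i := if i == l then w else u i.
have hl j : j \in S -> real_quat (qmul (qmul (qconj (u' l)) (edge_entry l j)) (u' j)).
  move=> jS; rewrite /u' eqxx; have [->|jl] := eqVneq j l.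
    by rewrite /edge_entry N_upper //; qsolve.
  have [<-|jk] := eqVneq k j; first by move: wr; congr real_quat; qsolve.
  have [Nlj Njl] : N l j = qzero R /\ N j l = qzero R.
    by apply: no_edge; apply: contra jk => /(lk _ jS) ->.
  by rewrite /edge_entry Nlj Njl /real_quat; qsolve.
exists u'; split=> [i|i j iS jS]; first by rewrite /u'; case: eqP.
have [il|il] := eqVneq i l; first by rewrite il; exact: (gauged_pair (hl _ jS)).1.
have [jl|jl] := eqVneq j l; first by rewrite jl; exact: (gauged_pair (hl _ iS)).2.
have -> : gauged u' i j = gauged u i j by rewrite /gauged /u' (negbTE il) (negbTE jl).
by apply: hr; rewrite !inE ?il ?jl.
Qed.

End Gauge.

Unset Implicit Arguments.

Theorem corollary4p3 (R : rcfType) (n : nat) (D N : 'M[quat R]_n) :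
  real_diagonal D -> strictly_upper N -> cycle_free N ->
  qconvex (numrange (mx_add D N)).
Proof.
move=> hD hN hcf.
have [u [hu hr]] := gauge_set hN hcf [set: 'I_n].
pose B := \matrix_(i, j) qmul (qmul (qconj (u i)) (mx_add D N i j)) (u j).
have B_real i j : B i j = qreal (q0 (B i j)).
  have -> : B i j = qadd (qmul (qmul (qconj (u i)) (D i j)) (u j)) (gauged N u i j).
    by rewrite !mxE /gauged; qsolve.
  apply: real_quat_add; last exact: hr.
  by rewrite hD; case: eqP => [<-|_]; rewrite /real_quat; qsolve.
have hB i j : B i j = qmul (qmul (qconj (u i)) (mx_add D N i j)) (u j) by rewrite mxE.
have sameW p : numrange (mx_add D N) p <-> numrange B p := numrange_diag_similar p hu hB.
move=> p q t hp hq ht; apply/sameW.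
by apply: (numrange_real_convex B_real) ht; apply/sameW.
Qed.
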